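(* Let $\gamma > \sqrt{2}$ and let $I$ be a $\gamma$-stable instance of the Euclidean Steiner tree problem with optimal Steiner tree $\mathrm{OPT}$. If $a_1, a_2$ are distinct terminals and $b$ is a Steiner point such that $a_1 b$ and $a_2 b$ are both edges of $\mathrm{OPT}$, then the angle $\theta = \angle a_1 b a_2$ satisfies $\theta > \pi/2$.
   Context: An instance of the Euclidean Steiner tree problem consists of a finite set $V \subset \mathbb{R}^d$, a set $T \subseteq V$ of terminals, and the complete graph on $V$ with edge weights $w_{uv} = \|u - v\|$. Points of $V \setminus T$ are Steiner points. A Steiner tree is a tree in this complete graph whose vertex set contains all of $T$; its weight is the sum of its edge weights. For $\gamma > 1$, the instance is $\gamma$-stable if it has a minimum-weight Steiner tree $\mathrm{OPT}$ such that for every $w' : V \times V \to \mathbb{R}_{\ge 0}$ with $w_{uv} \le w'_{uv} \le \gamma w_{uv}$ for all $u,v$, every minimum-weight Steiner tree with respect to $w'$ equals $\mathrm{OPT}$ (the $w'$ need not be Euclidean). $\angle a_1 b a_2 \in [0,\pi]$ is the angle at $b$ between the vectors $a_1 - b$ and $a_2 - b$. *)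

From HB Require Import structures.
From mathcomp Require Import all_boot all_order all_algebra.
From mathcomp Require Import all_classical all_reals all_analysis.
Set Implicit Arguments. Unset Strict Implicit. Unset Printing Implicit Defensive.
Import Order.TTheory GRing.Theory Num.Theory.
Local Open Scope ring_scope.

Definition dotp (R : realType) (d : nat) (x y : 'rV[R]_d) : R :=
  \sum_(i < d) x ord0 i * y ord0 i.
Definition enorm (R : realType) (d : nat) (x : 'rV[R]_d) : R :=
  Num.sqrt (dotp x x).

Definition angle (R : realType) (d : nat) (a1 b a2 : 'rV[R]_d) : R :=
  acos (dotp (a1 - b) (a2 - b) / (enorm (a1 - b) * enorm (a2 - b))).

(* An instance: vertices indexed by a finite type T, placed at points p v
   in R^d (p injective, so V = image of p is a finite point set), with
   terminal set Tm. *)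
Definition eweight (R : realType) (d : nat) (T : finType) (p : T -> 'rV[R]_d)
  (u v : T) : R := enorm (p u - p v).

(* A tree in the complete graph on T: vertex set S (nonempty) and edge set E
   of unordered pairs {u,v} (u <> v) inside S, connected on S, with
   #|E| = #|S| - 1 (connected with |E| = |S| - 1 <=> tree). *)
Definition edge_rel (T : finType) (E : {set {set T}}) : rel T :=
  fun u v => [set u; v] \in E.

Definition is_tree (T : finType) (S : {set T}) (E : {set {set T}}) : Prop :=
  [/\ S != finset.set0,
      (forall e, e \in E -> exists u v, [/\ u != v, u \in S, v \in S & e = [set u; v]]),
      (forall u v, u \in S -> v \in S -> connect (edge_rel E) u v)
    & #|E| = (#|S| - 1)%N].

Definition steiner_tree (T : finType) (Tm : {set T})
  (S : {set T}) (E : {set {set T}}) : Prop :=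
  is_tree S E /\ Tm \subset S.

(* Weight of an edge set w.r.t. a symmetric weight function w':
   each unordered edge {u,v} is counted via both ordered pairs, hence 1/2. *)
Definition tree_weight (R : realType) (T : finType) (w' : T -> T -> R)
  (E : {set {set T}}) : R :=
  2^-1 * \sum_(u : T) \sum_(v : T | [set u; v] \in E) w' u v.

Definition min_steiner_tree (R : realType) (T : finType) (Tm : {set T})
  (w' : T -> T -> R) (S : {set T}) (E : {set {set T}}) : Prop :=
  steiner_tree Tm S E /\
  forall S' E', steiner_tree Tm S' E' -> tree_weight w' E <= tree_weight w' E'.

Definition stable_with (R : realType) (d : nat) (T : finType)
  (p : T -> 'rV[R]_d) (Tm : {set T}) (gamma : R)
  (S : {set T}) (E : {set {set T}}) : Prop :=
  min_steiner_tree Tm (eweight p) S E /\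
  forall w' : T -> T -> R,
    (forall u v, w' u v = w' v u) ->
    (forall u v, eweight p u v <= w' u v <= gamma * eweight p u v) ->
    forall S' E', min_steiner_tree Tm w' S' E' -> S' = S /\ E' = E.

Definition gamma_stable (R : realType) (d : nat) (T : finType)
  (p : T -> 'rV[R]_d) (Tm : {set T}) (gamma : R) : Prop :=
  exists S E, stable_with p Tm gamma S E.

From HB Require Import structures.
From mathcomp Require Import all_boot all_order all_algebra.
From mathcomp Require Import all_classical all_reals all_analysis.
From mathcomp Require Import ring lra zify.
Import Order.TTheory GRing.Theory Num.Theory.
Local Open Scope ring_scope.

(* If the angle at b were at most pi/2, then, labelling so that
   |a1 - b| <= |a2 - b|, the law of cosines gives
   |a1 - a2| <= sqrt 2 |a2 - b| < gamma |a2 - b|.  Now multiply the weights of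
   the edges of OPT by gamma.  OPT stays the unique optimum, yet exchanging its
   edge a2b for a1a2 (not already an edge, as a tree has no triangle) yields a
   Steiner tree on the same vertices that is strictly lighter. *)

Lemma set2_eqb (T : finType) (a b c d : T) :
  ([set a; b] == [set c; d]) = (a == c) && (b == d) || (a == d) && (b == c).
Proof.
apply/eqP/orP => [E|[]/andP[/eqP-> /eqP->] //]; last by rewrite finset.setUC.
have : a \in [set c; d] by rewrite -E set21.
have : b \in [set c; d] by rewrite -E set22.
have : c \in [set a; b] by rewrite E set21.
have : d \in [set a; b] by rewrite E set22.
by rewrite !inE; do 4!case/orP=> /eqP ?; subst; rewrite ?eqxx; auto.
Qed.

Section ShortestPaths.
Context {T : finType} (e : rel T) (r : T).

Definition reachable_in (v : T) (n : nat) : bool :=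
  connect e r v ==> [exists t : n.-tuple T, path e r t && (last r t == v)].

Lemma reachable_in_exists v : exists n, reachable_in v n.
Proof.
have [/connectP[s pth lst]|nrv] := boolP (connect e r v); last first.
  by exists 0%N; rewrite /reachable_in (negbTE nrv).
exists (size s); apply/implyP => _; apply/existsP; exists (in_tuple s).
by rewrite pth lst eqxx.
Qed.

Definition dist v := ex_minn (reachable_in_exists v).

Lemma dist_min {v n} (t : n.-tuple T) : path e r t -> last r t = v -> (dist v <= n)%N.
Proof.
move=> pth lst; rewrite /dist; case: ex_minnP => m _; apply.
by apply/implyP => _; apply/existsP; exists t; rewrite pth lst eqxx.
Qed.

Lemma dist_parent v : connect e r v -> v != r ->
  exists2 u, e u v & (dist u < dist v)%N.
Proof.
move=> rv vr; rewrite {2}/dist; case: ex_minnP => m /implyP/(_ rv)/existsP.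
case=> -[s /= /eqP sz] /andP[pth /eqP lst] _.
case/lastP: s sz pth lst => [|s x]; first by move=> _ _ /= rv'; rewrite rv' eqxx in vr.
rewrite rcons_path last_rcons size_rcons => sz /andP[ps ex] xv; subst x.
by exists (last r s) => //; rewrite -sz ltnS (dist_min (in_tuple s) ps erefl).
Qed.

End ShortestPaths.

Arguments dist_parent {T e r v}.

(* Every vertex other than the root is injectively assigned the edge to a
   neighbour strictly closer to the root. *)
Lemma connected_card_le {T : finType} {S : {set T}} {F : {set {set T}}} {r} :
  r \in S -> {in S, forall v, connect (edge_rel F) r v} -> (#|S| <= #|F|.+1)%N.
Proof.
move=> rS rC; set e := edge_rel F.
pose par v := odflt r [pick u | e u v && (dist e r u < dist e r v)%N].
have parP v : v \in S -> v != r -> e (par v) v /\ (dist e r (par v) < dist e r v)%N.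
  move=> vS vr; rewrite /par; case: pickP => [u /andP[]//|none].
  have [u euv lt] := dist_parent (rC v vS) vr.
  by have := none u; rewrite /e euv lt.
pose edge v := [set v; par v].
have edge_inj : {in S :\ r &, injective edge}.
  move=> v v'; rewrite !inE => /andP[vr vS] /andP[v'r v'S] /eqP.
  rewrite set2_eqb => /orP[/andP[/eqP]//|/andP[/eqP vp /eqP pv]].
  have [_ lt] := parP v vS vr; have [_ lt'] := parP v' v'S v'r.
  rewrite pv in lt; rewrite -vp in lt'.
  by have := ltn_trans lt lt'; rewrite ltnn.
have : edge @: (S :\ r) \subset F.
  apply/fintype.subsetP => x /imsetP[v]; rewrite !inE => /andP[vr vS] ->.
  by have [epv _] := parP v vS vr; rewrite /edge finset.setUC.
move/subset_leq_card; rewrite card_in_imset // (cardsD1 r S) rS.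
by rewrite add1n ltnS.
Qed.

Section EdgeWeights.
Context {R : realType} {T : finType} (f : T -> T -> R).

Definition edge_weight (e : {set T}) : R :=
  2^-1 * \sum_(u : T) \sum_(v : T | [set u; v] == e) f u v.

Lemma tree_weightE (E : {set {set T}}) : tree_weight f E = \sum_(e in E) edge_weight e.
Proof.
rewrite /tree_weight /edge_weight -mulr_sumr; congr (_ * _).
rewrite exchange_big /=; apply: eq_bigr => u _.
rewrite (partition_big (fun v => [set u; v]) (mem E)) //=.
apply: eq_bigr => e eE; apply: eq_bigl => v.
by case: eqP => [->|]; rewrite ?eE ?andbF.
Qed.

Lemma tree_weight_swap (E : {set {set T}}) e e' : e \in E -> e' \notin E ->
  tree_weight f (e' |: (E :\ e)) = tree_weight f E - edge_weight e + edge_weight e'.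
Proof.
move=> eE e'E; rewrite !tree_weightE big_setU1 ?inE ?(negbTE e'E) ?andbF //=.
rewrite [in RHS](big_setD1 e) //=; lra.
Qed.

Lemma edge_weight_set2 c d : (forall u v, f u v = f v u) -> c != d ->
  edge_weight [set c; d] = f c d.
Proof.
move=> fC cd; rewrite /edge_weight (bigD1 c) // (bigD1 d) 1?eq_sym //=.
rewrite [X in _ + (_ + X)]big1 ?addr0 => [|u /andP[uc ud]]; last first.
  by apply: big_pred0 => v; rewrite set2_eqb (negbTE uc) (negbTE ud).
have pick x y : [set x; y] = [set c; d] -> x != y ->
    \sum_(v | [set x; v] == [set c; d]) f x v = f x y.
  move=> <- xy; rewrite (eq_bigl (pred1 y)) ?big_pred1_eq // => v.
  by rewrite set2_eqb eqxx (negbTE xy) /= orbF.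
rewrite (pick c d) // (pick d c) 1?finset.setUC 1?eq_sym // fC; lra.
Qed.

End EdgeWeights.

Section Euclid.
Context {R : realType} {d : nat}.
Implicit Types x y : 'rV[R]_d.

Lemma dotpC x y : dotp x y = dotp y x.
Proof. by apply: eq_bigr => i _; rewrite mulrC. Qed.

Lemma dotp_ge0 x : 0 <= dotp x x.
Proof. by apply: sumr_ge0 => i _; rewrite -expr2 sqr_ge0. Qed.

Lemma dotp_eq0 x : (dotp x x == 0) = (x == 0).
Proof.
apply/idP/eqP => [|->]; last by rewrite /dotp big1 // => i _; rewrite mxE mul0r.
rewrite psumr_eq0 => [/allP x0|i _]; last by rewrite -expr2 sqr_ge0.
apply/rowP => j; rewrite mxE.
by have := x0 j (mem_index_enum j); rewrite /= mulf_eq0 orbb => /eqP.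
Qed.

Lemma dotpDZ a b x y :
  dotp (a *: x + b *: y) (a *: x + b *: y) =
  a ^+ 2 * dotp x x + b ^+ 2 * dotp y y + 2 * a * b * dotp x y.
Proof.
rewrite /dotp !mulr_sumr -!big_split /=; apply: eq_bigr => i _.
rewrite !mxE; ring.
Qed.

Lemma dotpB x y : dotp (x - y) (x - y) = dotp x x + dotp y y - 2 * dotp x y.
Proof.
have -> : x - y = 1 *: x + (-1) *: y by rewrite scale1r scaleN1r.
by rewrite dotpDZ; ring.
Qed.

Lemma enorm_sqr x : enorm x ^+ 2 = dotp x x.
Proof. by rewrite sqr_sqrtr // dotp_ge0. Qed.

Lemma enorm_ge0 x : 0 <= enorm x.
Proof. exact: sqrtr_ge0. Qed.

Lemma enorm_gt0 x : (0 < enorm x) = (x != 0).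
Proof. by rewrite sqrtr_gt0 lt_def dotp_ge0 dotp_eq0 andbT. Qed.

Lemma enormN x : enorm (- x) = enorm x.
Proof. by rewrite /enorm /dotp; congr Num.sqrt; apply: eq_bigr => i _; rewrite !mxE mulrNN. Qed.

Lemma dotp_ge_Nmul x y : 0 < enorm x -> 0 < enorm y -> - (enorm x * enorm y) <= dotp x y.
Proof.
move=> x0 y0; have := dotp_ge0 (enorm y *: x + enorm x *: y).
rewrite dotpDZ -!enorm_sqr => h.
have : 0 < enorm x * enorm y by rewrite mulr_gt0.
nra.
Qed.

(* Cauchy-Schwarz is needed: below -1, [acos] returns a junk value. *)
Lemma dotp_lt0_acos x y : x != 0 -> y != 0 -> dotp x y < 0 ->
  pi / 2 < acos (dotp x y / (enorm x * enorm y)).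
Proof.
rewrite -!enorm_gt0 => x0 y0 xy0; have xy_gt0 : 0 < enorm x * enorm y by rewrite mulr_gt0.
set c := dotp x y / _.
have c_lt0 : c < 0 by rewrite pmulr_llt0 ?invr_gt0.
have cN1 : -1 <= c by rewrite ler_pdivlMr // mulN1r dotp_ge_Nmul.
have [/andP[a0 _] cos_a] := @acos_def _ c (introT andP (conj cN1 (ltW (lt_le_trans c_lt0 ler01)))).
rewrite ltNge; apply/negP => api2.
suff : 0 <= c by rewrite leNgt c_lt0.
rewrite -cos_a cos_ge0_pihalf // api2 andbT.
by apply: le_trans a0; rewrite oppr_le0 divr_ge0 ?pi_ge0.
Qed.

Lemma enormB_le_sqrt2 {x y} : 0 <= dotp x y -> enorm x <= enorm y ->
  enorm (x - y) <= Num.sqrt 2 * enorm y.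
Proof.
move=> xy0 le_xy; rewrite /enorm -sqrtrM // ler_sqrt ?dotpB; last first.
  by rewrite mulr_ge0 ?dotp_ge0.
have : dotp x x <= dotp y y by rewrite -!enorm_sqr lerXn2r ?nnegrE ?enorm_ge0.
lra.
Qed.

End Euclid.

Section Trees.
Context {T : finType}.
Implicit Types (S : {set T}) (E F : {set {set T}}).

Lemma tree_edge_mem {S E u v} : is_tree S E -> [set u; v] \in E -> u \in S.
Proof.
case=> _ edgesE _ _ /edgesE[x [y [_ xS yS]]] /setP/(_ u).
by rewrite set21 !inE => /esym/orP[]/eqP->.
Qed.

Lemma connect_reroute E F a1 a2 b u v :
  [set a1; a2] \in F -> [set a1; b] \in F -> E :\ [set a2; b] \subset F ->
  connect (edge_rel E) u v -> connect (edge_rel F) u v.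
Proof.
move=> a12F a1bF EF; apply: connect_sub => x y xyE.
have via_a1 : [set x; y] = [set a2; b] -> connect (edge_rel F) x y.
  move/eqP; rewrite set2_eqb => /orP[]/andP[/eqP-> /eqP->];
  by apply: (connect_trans (y := a1)); apply: connect1; rewrite /edge_rel // finset.setUC.
have [/via_a1 //|ne] := eqVneq [set x; y] [set a2; b].
by apply: connect1; apply: (fintype.subsetP EF); rewrite !inE ne.
Qed.

Section Triangle.
Variables (S : {set T}) (E : {set {set T}}) (a1 a2 b : T).
Hypotheses (tE : is_tree S E) (a12 : a1 != a2) (a1b : a1 != b).
Hypotheses (a1bE : [set a1; b] \in E) (a2bE : [set a2; b] \in E).

Let a12_neq : [set a1; a2] != [set a2; b].
Proof. by rewrite set2_eqb (negbTE a12) (negbTE a1b). Qed.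

Let a1b_neq : [set a1; b] != [set a2; b].
Proof. by rewrite set2_eqb (negbTE a12) (negbTE a1b). Qed.

Let card_setD1 : #|E| = #|E :\ [set a2; b]|.+1.
Proof. by rewrite (cardsD1 [set a2; b] E) a2bE. Qed.

(* Otherwise E minus {a2, b} would still connect S, with only #|S| - 2 edges. *)
Lemma is_tree_triangle_free : [set a1; a2] \notin E.
Proof.
apply/negP => a12E; case: (tE) => _ _ conn cardE.
have a1S := tree_edge_mem tE a1bE.
have S_gt0 : (0 < #|S|)%N by apply/card_gt0P; exists a1.
suff : (#|S| <= #|E :\ [set a2; b]|.+1)%N by lia.
apply: (connected_card_le a1S) => v vS.
by apply: (@connect_reroute E _ a1 a2 b) (conn _ _ a1S vS); rewrite ?subxx // !inE ?a12_neq ?a1b_neq.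
Qed.

Lemma is_tree_reroute : is_tree S ([set a1; a2] |: (E :\ [set a2; b])).
Proof.
case: (tE) => S0 edgesE conn cardE; split => //.
- move=> e; rewrite !inE => /orP[/eqP->|/andP[_ /edgesE]//].
  by exists a1, a2; rewrite (tree_edge_mem tE a1bE) (tree_edge_mem tE a2bE).
- move=> u v uS vS; apply: (@connect_reroute E _ a1 a2 b) (conn u v uS vS).
  + exact: setU11.
  + by rewrite !inE a1b_neq a1bE orbT.
  + exact: finset.subsetUr.
- by rewrite cardsU1 -cardE card_setD1 in_setD1 (negbTE is_tree_triangle_free) andbF.
Qed.

End Triangle.

End Trees.

Arguments is_tree_triangle_free {T S E a1 a2 b}.
Arguments is_tree_reroute {T S E a1 a2 b}.

Lemma min_steiner_tree_exists {R : realType} {T : finType} (Tm : {set T})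
    (w : T -> T -> R) {S E} :
  steiner_tree Tm S E -> exists S' E', min_steiner_tree Tm w S' E'.
Proof.
move=> stE; pose P (x : {set T} * {set {set T}}) := `[< steiner_tree Tm x.1 x.2 >].
have P0 : P (S, E) by apply/asboolP.
case: (arg_minP (fun x => tree_weight w x.2) P0) => -[S' E'] /asboolP stE' minE'.
by exists S', E'; split => // S'' E'' stE''; apply: (minE' (S'', E'')); apply/asboolP.
Qed.

Lemma eweightC {R : realType} {d : nat} {T : finType} (p : T -> 'rV[R]_d) u v :
  eweight p u v = eweight p v u.
Proof. by rewrite /eweight -enormN opprB. Qed.

Lemma stable_edge_shortcut {R : realType} {d : nat} {T : finType}
    {p : T -> 'rV[R]_d} {Tm : {set T}} {gamma : R} {S E a1 a2 b} :
  1 <= gamma -> stable_with p Tm gamma S E ->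
  a1 != a2 -> a1 != b -> a2 != b -> [set a1; b] \in E -> [set a2; b] \in E ->
  gamma * eweight p a2 b <= eweight p a1 a2.
Proof.
move=> g1 [[[tE TmS] _] stable] a12 a1b a2b a1bE a2bE.
pose w u v := if [set u; v] \in E then gamma * eweight p u v else eweight p u v.
have wC u v : w u v = w v u by rewrite /w finset.setUC eweightC.
have w_bounds u v : eweight p u v <= w u v <= gamma * eweight p u v.
  have : 0 <= eweight p u v := enorm_ge0 _.
  by rewrite /w; case: ifP => _ ?; apply/andP; split; nra.
have [S' [E' minE']] := min_steiner_tree_exists Tm w (conj tE TmS).
have [eS eE] := stable w wC w_bounds _ _ minE'; subst S' E'.
have a12_notin_E := is_tree_triangle_free tE a12 a1b a1bE a2bE.
have := minE'.2 S _ (conj (is_tree_reroute tE a12 a1b a1bE a2bE) TmS).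
rewrite tree_weight_swap // !edge_weight_set2 // /w a2bE (negbTE a12_notin_E).
lra.
Qed.

Theorem mainTheorem11 (R : realType) (d : nat) (T : finType)
  (p : T -> 'rV[R]_d) (Tm : {set T}) (gamma : R)
  (S : {set T}) (E : {set {set T}}) :
  injective p ->
  Num.sqrt 2 < gamma ->
  stable_with p Tm gamma S E ->
  forall a1 a2 b : T,
    a1 \in Tm -> a2 \in Tm -> a1 != a2 -> b \notin Tm ->
    [set a1; b] \in E -> [set a2; b] \in E ->
    pi / 2 < angle (p a1) (p b) (p a2).
Proof.
move=> p_inj sqrt2_gamma stable a1 a2 b a1T a2T a12 bT a1bE a2bE.
have g1 : 1 <= gamma.
  by apply: le_trans (ltW sqrt2_gamma); rewrite -[X in X <= _]sqrtr1 ler_sqrt // ler1n.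
have p_neq u v : u != v -> p u - p v != 0.
  by rewrite subr_eq0; apply: contra => /eqP/p_inj->.
have [a1b a2b] : a1 != b /\ a2 != b by split; apply: contraNneq bT => <-.
rewrite /angle; apply: dotp_lt0_acos; [exact: p_neq | exact: p_neq |].
rewrite ltNge; apply/negP => dot_ge0.
wlog le12 : a1 a2 a1T a2T a12 a1b a2b a1bE a2bE dot_ge0 /
    enorm (p a1 - p b) <= enorm (p a2 - p b).
  move=> hwlog; case: (lerP (enorm (p a1 - p b)) (enorm (p a2 - p b))) => [le12|/ltW le21].
    exact: (hwlog a1 a2).
  have a21 : a2 != a1 by rewrite eq_sym.
  by apply: (hwlog a2 a1) => //; rewrite dotpC.
have shortcut := stable_edge_shortcut g1 stable a12 a1b a2b a1bE a2bE.
have := enormB_le_sqrt2 dot_ge0 le12.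
have -> : p a1 - p b - (p a2 - p b) = p a1 - p a2 by rewrite opprB addrA subrK.
have : 0 < enorm (p a2 - p b) by rewrite enorm_gt0 p_neq.
rewrite /eweight in shortcut; nra.
Qed.
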